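(* Let $\beta=(\beta_n)_{n\ge0}$ be an essentially decreasing sequence of positive numbers with $\liminf_n\beta_n^{1/n}\ge1$, and assume that for some $a\in(0,1)$ the map $T_a$ induces a bounded composition operator on $H^2(\beta)$. Then $\beta$ satisfies the $\Delta_2$-condition.
   Context: $H^2(\beta)$ is the Hilbert space of analytic functions $f(z)=\sum_{n\ge0}a_nz^n$ on the unit disk $\mathbb D$ with $\|f\|^2=\sum_{n\ge0}|a_n|^2\beta_n<\infty$. $T_a(z)=\frac{a+z}{1+\bar a z}$ and $C_{T_a}f=f\circ T_a$. $\beta$ is essentially decreasing if there is $C\ge1$ with $\beta_m\le C\beta_n$ for all $m\ge n\ge0$. $\beta$ satisfies the $\Delta_2$-condition if there is $\delta\in(0,1)$ with $\beta_{2n}\ge\delta\beta_n$ for all $n\ge0$. *)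

From Stdlib Require Import Reals.
From Coquelicot Require Import Coquelicot.
Open Scope R_scope.

(* An element of H^2(beta) is represented by its Taylor coefficient sequence. *)
Definition in_H2 (beta : nat -> R) (c : nat -> C) : Prop :=
  ex_series (fun n => (Cmod (c n)) ^ 2 * beta n).

Definition H2norm2 (beta : nat -> R) (c : nat -> C) : R :=
  Series (fun n => (Cmod (c n)) ^ 2 * beta n).

Definition pseries_C (c : nat -> C) (w s : C) : Prop :=
  @is_series C_AbsRing C_NormedModule (fun n => Cmult (c n) (pow_n w n)) s.

Definition T_map (a : C) (z : C) : C :=
  Cdiv (Cplus a z) (Cplus 1 (Cmult (Cconj a) z)).

Definition ess_decreasing (beta : nat -> R) : Prop :=
  exists K : R, 1 <= K /\ forall m n : nat, (n <= m)%nat -> beta m <= K * beta n.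

Definition Delta2 (beta : nat -> R) : Prop :=
  exists delta : R, 0 < delta < 1 /\ forall n : nat, beta (2 * n)%nat >= delta * beta n.

(* C_{T_a} is a bounded operator on H^2(beta): for every f in H^2(beta),
   f o T_a is (on the unit disk) the analytic function of some g in H^2(beta),
   and ||f o T_a|| <= M ||f||. *)
Definition bounded_comp (beta : nat -> R) (a : C) : Prop :=
  exists M : R, 0 <= M /\
    forall c : nat -> C, in_H2 beta c ->
      exists d : nat -> C, in_H2 beta d /\
        (forall z : C, Cmod z < 1 ->
           exists s : C, pseries_C c (T_map a z) s /\ pseries_C d z s) /\
        H2norm2 beta d <= M * H2norm2 beta c.

From Stdlib Require Import Reals Lra Lia Psatz.
From Coquelicot Require Import Coquelicot.
Open Scope R_scope.

(* Write w_n = 1/beta_n and gen w v = sum_m w_m v^m, so that gen w (s^2) is the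
   squared norm of the reproducing kernel k_s(z) = sum_m s^m z^m / beta_m.
   1. The liminf hypothesis makes gen w converge on [0,1) (gen_inv_converges).
   2. Applying the bounded operator C_{T_a} to k_s with s = T_a(r) and
      evaluating at r (point_evaluation_bound) yields the kernel comparison
      gen w (T_a(r)^2) <= B gen w (r^2) for all 0 < r < 1 (kernel_comparison).
   3. w is essentially increasing.  At the scale r = 1 - alpha/n, where
      r / T_a(r) <= 1 - a alpha/n, splitting the series at n bounds
      gen w (r^2) above by 2 n K w_n, while the terms 2n <= m < 3n bound it
      below by n (w_(2n)/K) exp(-12 alpha); hence w_(2n) <= C w_n for large n
      (doubling_eventually).
   4. The finitely many remaining indices are handled by a minimum, giving
      Delta_2 (Delta2_of_eventual_doubling). *)

Lemma pow_antitone (x : R) (n m : nat) :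
  0 <= x <= 1 -> (n <= m)%nat -> x ^ m <= x ^ n.
Proof.
  intros Hx Hnm. replace m with (n + (m - n))%nat by lia. rewrite pow_add.
  assert (0 <= x ^ n) by (apply pow_le; lra).
  assert (x ^ (m - n) <= 1) by (rewrite <- (pow1 (m - n)); apply pow_incr; lra).
  nra.
Qed.

Lemma bernoulli_decay (y : R) (n : nat) :
  0 <= y <= 1 -> (1 - y) ^ n * (1 + INR n * y) <= 1.
Proof.
  intros Hy.
  assert (Hlin : 1 + INR n * y <= (1 + y) ^ n) by (apply Rle_pow_lin; lra).
  assert (Hprod : (1 - y) ^ n * (1 + y) ^ n <= 1).
  { rewrite <- Rpow_mult_distr. apply Rle_trans with (1 ^ n); [|rewrite pow1; lra].
    apply pow_incr. nra. }
  assert (0 <= (1 - y) ^ n) by (apply pow_le; lra).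
  nra.
Qed.

Lemma exp_pow_lower (x : R) (k : nat) :
  0 <= x <= 1/2 -> exp (- (2 * INR k * x)) <= (1 - x) ^ k.
Proof.
  intros Hx.
  assert (Hstep : exp (- (2 * x)) <= 1 - x).
  { assert (H1 := exp_ineq1_le (2 * x)). assert (0 < exp (2 * x)) by apply exp_pos.
    rewrite exp_Ropp. apply Rmult_le_reg_l with (exp (2 * x)); auto.
    rewrite Rinv_r by lra. nra. }
  induction k as [|k IH].
  - simpl. rewrite Rmult_0_r, Rmult_0_l, Ropp_0, exp_0. lra.
  - rewrite S_INR. simpl pow.
    replace (- (2 * (INR k + 1) * x)) with (- (2 * x) + - (2 * INR k * x)) by ring.
    rewrite exp_plus.
    apply Rmult_le_compat; try (apply Rlt_le, exp_pos); assumption.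
Qed.

Lemma weighted_amgm (X Y b lam : R) :
  0 < b -> 0 < lam ->
  X * Y <= 1/2 * (lam * (X ^ 2 * b)) + 1/2 * (/ lam * (/ b * Y ^ 2)).
Proof.
  intros Hb Hlam.
  assert (Hid : 1/2 * (lam * (X ^ 2 * b)) + 1/2 * (/ lam * (/ b * Y ^ 2)) - X * Y
              = (lam * b * X - Y) ^ 2 / (2 * lam * b)) by (field; lra).
  assert (0 <= (lam * b * X - Y) ^ 2 / (2 * lam * b)).
  { apply Rdiv_le_0_compat; [apply pow2_ge_0 | nra]. }
  lra.
Qed.

Lemma is_series_zero : is_series (fun _ : nat => 0) 0.
Proof.
  apply filterlim_ext with (fun _ => 0); [|apply filterlim_const].
  intro n. rewrite sum_n_const. simpl; ring.
Qed.

Lemma Series_nonneg (a : nat -> R) :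
  (forall n, 0 <= a n) -> ex_series a -> 0 <= Series a.
Proof.
  intros Ha Hex. rewrite <- (is_series_unique _ _ is_series_zero).
  apply Series_le; [intro n; split; [lra | apply Ha] | exact Hex].
Qed.

Lemma is_series_indicator (N : nat) (c : R) :
  is_series (fun m => if (m <? N)%nat then c else 0) (INR N * c).
Proof.
  destruct N as [|N].
  - simpl. rewrite Rmult_0_l. exact is_series_zero.
  - apply is_series_decr_n with (n := S N); [lia|]. simpl pred.
    rewrite (sum_n_ext_loc _ (fun _ => c)) by
      (intros n Hn; destruct (Nat.ltb_spec n (S N)); [reflexivity | lia]).
    rewrite sum_n_const.
    match goal with |- is_series _ ?l => replace l with 0 end.
    2: { change (0 = INR (S N) * c + - (INR (S N) * c)). ring. }
    apply (is_series_ext (fun _ => 0)); [|exact is_series_zero].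
    intro k. destruct (Nat.ltb_spec (S N + k) (S N)); [lia | reflexivity].
Qed.

Lemma Series_indicator (N : nat) (c : R) :
  Series (fun m => if (m <? N)%nat then c else 0) = INR N * c.
Proof. apply is_series_unique, is_series_indicator. Qed.

Lemma ex_series_indicator (N : nat) (c : R) :
  ex_series (fun m => if (m <? N)%nat then c else 0).
Proof. eexists; apply is_series_indicator. Qed.

Lemma ex_series_Rscal (c : R) (a : nat -> R) :
  ex_series a -> ex_series (fun n => c * a n).
Proof. exact (@ex_series_scal_l R_AbsRing R_NormedModule c a). Qed.

Lemma ex_series_Rplus (a b : nat -> R) :
  ex_series a -> ex_series b -> ex_series (fun n => a n + b n).
Proof. exact (@ex_series_plus R_AbsRing R_NormedModule a b). Qed.

Lemma sum_n_RtoC (f : nat -> R) (N : nat) :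
  @sum_n C_AbelianMonoid (fun k => RtoC (f k)) N = RtoC (sum_n f N).
Proof.
  induction N as [|N IH].
  - rewrite !sum_O. reflexivity.
  - rewrite !sum_Sn, IH.
    change (Cplus (RtoC (sum_n f N)) (RtoC (f (S N))) = RtoC (plus (sum_n f N) (f (S N)))).
    rewrite <- RtoC_plus. reflexivity.
Qed.

Lemma is_series_RtoC (f : nat -> R) (l : R) :
  is_series f l -> @is_series C_AbsRing C_NormedModule (fun k => RtoC (f k)) (RtoC l).
Proof.
  intro H. apply filterlim_locally. intro eps.
  generalize (proj1 (filterlim_locally _ _) H eps). apply filter_imp.
  intros N HN. apply norm_compat1. rewrite sum_n_RtoC.
  change (Cmod (Cminus (RtoC (sum_n f N)) (RtoC l)) < eps).
  unfold Cminus. rewrite <- RtoC_opp, <- RtoC_plus, Cmod_R. exact HN.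
Qed.

Lemma pow_n_RtoC (x : R) (m : nat) : @pow_n C_Ring (RtoC x) m = RtoC (x ^ m).
Proof.
  induction m as [|m IH]; [reflexivity|].
  simpl. rewrite IH. change (Cmult (RtoC x) (RtoC (x ^ m)) = RtoC (x * x ^ m)).
  rewrite <- RtoC_mult. reflexivity.
Qed.

Lemma Cmod_series_le (a : nat -> C) (S : C) (L : R) :
  @is_series C_AbsRing C_NormedModule a S -> is_series (fun k => Cmod (a k)) L ->
  Cmod S <= L.
Proof.
  intros HS HL.
  assert (Hnorm : is_lim_seq (fun N => Cmod (@sum_n C_AbelianMonoid a N)) (Cmod S)).
  { apply (filterlim_comp _ _ _ (sum_n a) (@norm C_AbsRing C_NormedModule) _ (locally S)).
    - exact HS.
    - exact (@filterlim_norm C_AbsRing C_NormedModule S). }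
  assert (Hpartial : forall N, Cmod (@sum_n C_AbelianMonoid a N) <= sum_n (fun k => Cmod (a k)) N)
    by (intro N; exact (@norm_sum_n_m C_AbsRing C_NormedModule a 0 N)).
  exact (is_lim_seq_le _ _ (Finite (Cmod S)) (Finite L) Hpartial Hnorm HL).
Qed.

Lemma is_series_C_unique (a : nat -> C) (S S' : C) :
  @is_series C_AbsRing C_NormedModule a S ->
  @is_series C_AbsRing C_NormedModule a S' -> S = S'.
Proof.
  intros H H'.
  exact (@filterlim_locally_unique nat C_AbsRing C_NormedModule eventually
           (Proper_StrongProper _ eventually_filter) _ S S' H H').
Qed.

(* The generating function sum_m w_m v^m of a weight sequence.  For w = 1/beta
   and v = |z|^2 it is the squared norm of the reproducing kernel of H^2(beta)
   at z. *)
Definition gen (w : nat -> R) (v : R) : R := Series (fun m => w m * v ^ m).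

Lemma liminf_root_eventually (beta : nat -> R) (th : R) :
  Rbar_le (Finite 1) (LimInf_seq (fun n : nat => Rpower (beta n) (/ INR n))) ->
  th < 1 -> exists N, forall n, (N <= n)%nat -> th < Rpower (beta n) (/ INR n).
Proof.
  intros Hli Hth.
  destruct (ex_LimInf_seq (fun n : nat => Rpower (beta n) (/ INR n))) as [l Hl].
  rewrite (is_LimInf_seq_unique _ _ Hl) in Hli.
  destruct l as [l| |]; simpl in Hli, Hl.
  - assert (Hgap : 0 < l - th) by lra.
    destruct (proj2 (Hl (mkposreal _ Hgap))) as [N HN].
    exists N. intros n Hn. specialize (HN n Hn). simpl in HN. lra.
  - apply Hl.
  - contradiction.
Qed.

Lemma pow_le_of_root (b th : R) (n : nat) :
  0 < b -> 0 <= th -> (0 < n)%nat -> th < Rpower b (/ INR n) -> th ^ n <= b.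
Proof.
  intros Hb Hth Hn Hroot.
  assert (Hnpos : 0 < INR n) by (apply lt_0_INR; exact Hn).
  assert (Hpow : Rpower b (/ INR n) ^ n = b).
  { rewrite <- Rpower_pow by apply exp_pos.
    rewrite Rpower_mult, Rinv_l by lra. apply Rpower_1; exact Hb. }
  rewrite <- Hpow. apply pow_incr. lra.
Qed.

(* Under the liminf hypothesis the weight series sum_m v^m / beta_m converges
   on [0,1): it is dominated by a geometric series of ratio v/theta. *)
Lemma gen_inv_converges (beta : nat -> R) :
  (forall n, 0 < beta n) ->
  Rbar_le (Finite 1) (LimInf_seq (fun n : nat => Rpower (beta n) (/ INR n))) ->
  forall v, 0 <= v < 1 -> ex_series (fun m => / beta m * v ^ m).
Proof.
  intros Hb Hli v Hv.
  set (th := (1 + v) / 2).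
  assert (Hth : v < th < 1) by (unfold th; lra).
  destruct (liminf_root_eventually beta th Hli (proj2 Hth)) as [N HN].
  assert (Hratio : 0 <= v / th < 1).
  { split; [apply Rdiv_le_0_compat; lra|].
    apply Rmult_lt_reg_r with th; [lra|]. unfold Rdiv. rewrite Rmult_assoc, Rinv_l; lra. }
  apply (proj2 (ex_series_incr_n _ (S N))).
  apply (@ex_series_le R_AbsRing R_CompleteNormedModule _ (fun k => (v / th) ^ (S N + k))).
  2: { apply (proj1 (ex_series_incr_n (fun k => (v / th) ^ k) (S N))).
       apply ex_series_geom. rewrite Rabs_pos_eq; lra. }
  intro k. set (m := (S N + k)%nat).
  change (Rabs (/ beta m * v ^ m) <= (v / th) ^ m).
  assert (Hbm := Hb m).
  assert (Hthm : th ^ m <= beta m) by (apply pow_le_of_root; [exact Hbm | lra | unfold m; lia | apply HN; unfold m; lia]).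
  assert (Hthm0 : 0 < th ^ m) by (apply pow_lt; lra).
  assert (Hvm : 0 <= v ^ m) by (apply pow_le; lra).
  rewrite Rabs_pos_eq by (apply Rmult_le_pos; [apply Rlt_le, Rinv_0_lt_compat|]; lra).
  unfold Rdiv. rewrite Rpow_mult_distr, pow_inv, Rmult_comm.
  apply Rmult_le_compat_l; [exact Hvm|]. apply Rinv_le_contravar; assumption.
Qed.

Definition mobius (a r : R) : R := (a + r) / (1 + a * r).

Lemma T_map_real (a r : R) : 0 < 1 + a * r ->
  T_map (RtoC a) (RtoC r) = RtoC (mobius a r).
Proof.
  intro H. unfold T_map, mobius.
  assert (Hconj : Cconj (RtoC a) = RtoC a) by (unfold Cconj, RtoC; simpl; f_equal; ring).
  rewrite Hconj, <- RtoC_mult.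
  change (Cplus 1 (RtoC (a * r))) with (Cplus (RtoC 1) (RtoC (a * r))).
  rewrite <- !RtoC_plus, RtoC_div by lra. reflexivity.
Qed.

Lemma mobius_bounds (a r : R) : 0 < a < 1 -> 0 < r < 1 ->
  r <= mobius a r < 1.
Proof.
  intros Ha Hr. unfold mobius.
  assert (Hden : 0 < 1 + a * r) by nra.
  split.
  - apply Rmult_le_reg_r with (1 + a * r); [exact Hden|].
    unfold Rdiv. rewrite Rmult_assoc, Rinv_l by lra.
    assert (0 <= a * (1 - r * r)) by (apply Rmult_le_pos; nra). nra.
  - apply Rmult_lt_reg_r with (1 + a * r); [exact Hden|].
    unfold Rdiv. rewrite Rmult_assoc, Rinv_l by lra. nra.
Qed.

Lemma mobius_ratio (a x : R) : 0 < a < 1 -> 0 < x < 1 ->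
  (1 - x) / mobius a (1 - x) <= 1 - a * x.
Proof.
  intros Ha Hx.
  assert (Hs := mobius_bounds a (1 - x) Ha ltac:(lra)).
  assert (Hden : 0 < 1 + a * (1 - x)) by nra.
  apply Rmult_le_reg_r with (mobius a (1 - x)); [lra|].
  unfold Rdiv. rewrite Rmult_assoc, Rinv_l, Rmult_1_r by lra.
  unfold mobius, Rdiv.
  apply Rmult_le_reg_r with (1 + a * (1 - x)); [exact Hden|].
  rewrite !Rmult_assoc, Rinv_l, Rmult_1_r by lra.
  assert (0 <= a * x * (1 - a)) by (apply Rmult_le_pos; nra). nra.
Qed.

(* At the scale x = alpha/n with n a x = 2B, the n-th power of the squared
   ratio (r / T_a(r))^2, r = 1 - x, is small enough to absorb the constant B. *)
Lemma mobius_ratio_decay (a B x : R) (n : nat) :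
  0 < a < 1 -> 0 < x < 1 -> 0 < B -> INR n * (a * x) = 2 * B ->
  (((1 - x) / mobius a (1 - x)) ^ 2) ^ n * B <= 1/2.
Proof.
  intros Ha Hx HB Hscale.
  set (q := (1 - x) / mobius a (1 - x)).
  assert (Hs := mobius_bounds a (1 - x) Ha ltac:(lra)).
  assert (Hq0 : 0 <= q) by (unfold q; apply Rdiv_le_0_compat; lra).
  assert (Hq1 : q <= 1 - a * x) by (unfold q; apply mobius_ratio; lra).
  assert (Hax : 0 <= a * x <= 1) by nra.
  assert (Hpow : (q ^ 2) ^ n <= (1 - a * x) ^ n) by (apply pow_incr; nra).
  assert (Hbern := bernoulli_decay (a * x) n Hax). rewrite Hscale in Hbern.
  assert (0 <= (q ^ 2) ^ n) by (apply pow_le; nra).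
  nra.
Qed.

Section Kernels.

Variable beta : nat -> R.
Hypothesis beta_pos : forall n, 0 < beta n.

(* Taylor coefficients of the reproducing kernel of H^2(beta) at a real point s:
   k_s(z) = sum_m s^m z^m / beta_m. *)
Definition kernel_coeffs (s : R) : nat -> C := fun m => RtoC (s ^ m / beta m).

Lemma kernel_coeffs_weight (s : R) (m : nat) :
  Cmod (kernel_coeffs s m) ^ 2 * beta m = / beta m * (s ^ 2) ^ m.
Proof.
  unfold kernel_coeffs. rewrite Cmod_R, pow2_abs, <- !pow_mult.
  replace (2 * m)%nat with (m * 2)%nat by lia. rewrite pow_mult.
  assert (Hbm := beta_pos m). field. lra.
Qed.

Lemma kernel_in_H2 (s : R) :
  ex_series (fun m => / beta m * (s ^ 2) ^ m) ->
  in_H2 beta (kernel_coeffs s) /\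
  H2norm2 beta (kernel_coeffs s) = gen (fun m => / beta m) (s ^ 2).
Proof.
  intro Hex. split.
  - apply (ex_series_ext (fun m => / beta m * (s ^ 2) ^ m)); [|exact Hex].
    intro m. symmetry. apply kernel_coeffs_weight.
  - apply Series_ext. apply kernel_coeffs_weight.
Qed.

Lemma kernel_eval (s : R) :
  ex_series (fun m => / beta m * (s ^ 2) ^ m) ->
  pseries_C (kernel_coeffs s) (RtoC s) (RtoC (gen (fun m => / beta m) (s ^ 2))).
Proof.
  intro Hex. unfold pseries_C.
  apply (is_series_ext (fun m => RtoC (/ beta m * (s ^ 2) ^ m))).
  - intro m. unfold kernel_coeffs. rewrite pow_n_RtoC.
    change (RtoC (/ beta m * (s ^ 2) ^ m) = Cmult (RtoC (s ^ m / beta m)) (RtoC (s ^ m))).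
    rewrite <- RtoC_mult, <- pow_mult. f_equal.
    replace (2 * m)%nat with (m + m)%nat by lia. rewrite pow_add. field.
    apply Rgt_not_eq, beta_pos.
  - apply is_series_RtoC, Series_correct, Hex.
Qed.

Lemma point_evaluation_bound (d : nat -> C) (r lam : R) (S : C) :
  in_H2 beta d -> 0 <= r -> 0 < lam ->
  ex_series (fun m => / beta m * (r ^ 2) ^ m) ->
  pseries_C d (RtoC r) S ->
  Cmod S <= 1/2 * (lam * H2norm2 beta d)
            + 1/2 * (/ lam * gen (fun m => / beta m) (r ^ 2)).
Proof.
  intros Hd Hr Hlam Hker HS.
  set (e := fun m => Cmod (d m) * r ^ m).
  set (bound := fun m => 1/2 * (lam * (Cmod (d m) ^ 2 * beta m))
                         + 1/2 * (/ lam * (/ beta m * (r ^ 2) ^ m))).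
  assert (He : forall m, 0 <= e m <= bound m).
  { intro m. unfold e, bound.
    assert (0 <= Cmod (d m)) by apply Cmod_ge_0.
    assert (0 <= r ^ m) by (apply pow_le; lra).
    split; [nra|].
    rewrite <- pow_mult. replace (2 * m)%nat with (m * 2)%nat by lia. rewrite pow_mult.
    apply weighted_amgm; [apply beta_pos | exact Hlam]. }
  assert (Hbound : ex_series bound).
  { apply ex_series_Rplus; apply ex_series_Rscal, ex_series_Rscal; assumption. }
  assert (Hexe : ex_series e).
  { apply (@ex_series_le R_AbsRing R_CompleteNormedModule _ bound); [|exact Hbound].
    intro m. change (Rabs (e m) <= bound m). rewrite Rabs_pos_eq; apply He. }
  apply Rle_trans with (Series e).
  - apply (Cmod_series_le _ _ _ HS).
    apply (is_series_ext e); [|apply Series_correct, Hexe].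
    intro m. unfold e. change (Cmod (d m) * r ^ m = Cmod (Cmult (d m) (pow_n (RtoC r) m))).
    rewrite pow_n_RtoC, Cmod_mult, Cmod_R, (Rabs_pos_eq (r ^ m)) by (apply pow_le; lra).
    reflexivity.
  - apply Rle_trans with (Series bound); [apply Series_le; assumption|].
    unfold bound. rewrite Series_plus by (apply ex_series_Rscal, ex_series_Rscal; assumption).
    rewrite !Series_scal_l. apply Rle_refl.
Qed.

(* Testing the boundedness of C_{T_a} on the kernel k_s with s = T_a(r) gives
   ||k_{T_a(r)}||^2 <= B ||k_r||^2 for all r in (0,1). *)
Lemma kernel_comparison (a : R) :
  0 < a < 1 ->
  (forall v, 0 <= v < 1 -> ex_series (fun m => / beta m * v ^ m)) ->
  bounded_comp beta (RtoC a) ->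
  exists B, 0 < B /\ forall r, 0 < r < 1 ->
    gen (fun m => / beta m) (mobius a r ^ 2) <= B * gen (fun m => / beta m) (r ^ 2).
Proof.
  intros Ha Hex [M [HM Hbc]].
  exists (M + 1). split; [lra|]. intros r Hr.
  set (s := mobius a r).
  assert (Hs := mobius_bounds a r Ha Hr). fold s in Hs.
  assert (Hexs : ex_series (fun m => / beta m * (s ^ 2) ^ m)) by (apply Hex; nra).
  assert (Hexr : ex_series (fun m => / beta m * (r ^ 2) ^ m)) by (apply Hex; nra).
  destruct (kernel_in_H2 s Hexs) as [Hk Hknorm].
  destruct (Hbc _ Hk) as [d [Hd [Hcomp Hdnorm]]].
  destruct (Hcomp (RtoC r)) as [S [HSk HSd]].
  { rewrite Cmod_R, Rabs_pos_eq; lra. }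
  unfold pseries_C in HSk.
  rewrite T_map_real in HSk by nra. fold s in HSk.
  assert (HS : S = RtoC (gen (fun m => / beta m) (s ^ 2)))
    by exact (is_series_C_unique _ _ _ HSk (kernel_eval s Hexs)).
  assert (Heval := point_evaluation_bound d r (/ (M + 1)) S Hd ltac:(lra)
                     ltac:(apply Rinv_0_lt_compat; lra) Hexr HSd).
  rewrite HS, Cmod_R, Rinv_inv in Heval. rewrite Hknorm in Hdnorm.
  set (Fs := gen (fun m => / beta m) (s ^ 2)) in *.
  set (Fr := gen (fun m => / beta m) (r ^ 2)) in *.
  assert (HFs : 0 <= Fs).
  { apply Series_nonneg; [|exact Hexs]. intro m.
    apply Rmult_le_pos; [apply Rlt_le, Rinv_0_lt_compat, beta_pos | apply pow_le; nra]. }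
  assert (Hnorm : / (M + 1) * H2norm2 beta d <= Fs).
  { apply Rle_trans with (/ (M + 1) * (M * Fs)).
    - apply Rmult_le_compat_l; [apply Rlt_le, Rinv_0_lt_compat; lra | exact Hdnorm].
    - rewrite <- Rmult_assoc. rewrite <- (Rmult_1_l Fs) at 2.
      apply Rmult_le_compat_r; [exact HFs|].
      apply Rmult_le_reg_l with (M + 1); [lra|].
      rewrite <- Rmult_assoc, Rinv_r by lra. lra. }
  rewrite Rabs_pos_eq in Heval by exact HFs. lra.
Qed.

End Kernels.

Section EssentiallyIncreasingWeights.

(* A positive, essentially increasing weight w (here w = 1/beta) whose
   generating function converges on [0,1). *)
Variables (w : nat -> R) (K : R).
Hypothesis w_pos : forall n, 0 < w n.
Hypothesis K_ge_1 : 1 <= K.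
Hypothesis w_ess_increasing : forall n m, (n <= m)%nat -> w n <= K * w m.
Hypothesis w_gen_converges : forall v, 0 <= v < 1 -> ex_series (fun m => w m * v ^ m).

Lemma gen_nonneg (v : R) : 0 <= v < 1 -> 0 <= gen w v.
Proof.
  intro Hv. apply Series_nonneg; [|apply w_gen_converges, Hv].
  intro m. apply Rmult_le_pos; [apply Rlt_le, w_pos | apply pow_le; lra].
Qed.

(* Upper bound: splitting the series at n, the head is at most n K w_n and the
   tail at the point q u is at most q^n times the tail at u. *)
Lemma gen_split (n : nat) (q u : R) : 0 <= q <= 1 -> 0 <= u < 1 ->
  gen w (q * u) <= q ^ n * gen w u + INR n * (K * w n).
Proof.
  intros Hq Hu. unfold gen.
  assert (Hexu := w_gen_converges u Hu).
  rewrite <- Series_indicator, <- Series_scal_l,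
    <- Series_plus by (apply ex_series_Rscal, Hexu || apply ex_series_indicator).
  apply Series_le.
  2: { apply ex_series_Rplus; [apply ex_series_Rscal, Hexu | apply ex_series_indicator]. }
  intro m. assert (Hwm := w_pos m).
  assert (Hqm : 0 <= q ^ m) by (apply pow_le; lra).
  assert (Hum : 0 <= u ^ m) by (apply pow_le; lra).
  assert (Hqn : 0 <= q ^ n) by (apply pow_le; lra).
  rewrite Rpow_mult_distr. split; [apply Rmult_le_pos; nra|].
  destruct (Nat.ltb_spec m n) as [Hmn | Hnm].
  - assert (q ^ m * u ^ m <= 1).
    { rewrite <- Rpow_mult_distr, <- (pow1 m). apply pow_incr. nra. }
    assert (w m <= K * w n) by (apply w_ess_increasing; lia).
    assert (0 <= q ^ n * (w m * u ^ m)) by (apply Rmult_le_pos; nra).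
    nra.
  - assert (q ^ m <= q ^ n) by (apply pow_antitone; [lra | exact Hnm]).
    assert (q ^ m * u ^ m <= q ^ n * u ^ m) by nra.
    nra.
Qed.

(* Lower bound: the terms with 2n <= m < 3n each contribute at least
   (w_(2n)/K) t^(3n). *)
Lemma gen_window (n : nat) (t : R) : 0 <= t < 1 ->
  INR n * (w (2 * n)%nat / K * t ^ (3 * n)) <= gen w t.
Proof.
  intros Ht. unfold gen.
  set (L := w (2 * n)%nat / K * t ^ (3 * n)).
  assert (HL : 0 <= L).
  { unfold L. apply Rmult_le_pos; [|apply pow_le; lra].
    apply Rdiv_le_0_compat; [apply Rlt_le, w_pos | lra]. }
  replace (INR n * L) with (INR (3 * n) * L - INR (2 * n) * L)
    by (rewrite !mult_INR; simpl; ring).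
  rewrite <- !Series_indicator, <- Series_minus by apply ex_series_indicator.
  apply Series_le; [|apply w_gen_converges, Ht].
  intro m. assert (Hwm := w_pos m).
  assert (Htm : 0 <= t ^ m) by (apply pow_le; lra).
  destruct (Nat.ltb_spec m (3 * n)); destruct (Nat.ltb_spec m (2 * n)); try lia.
  - split; nra.
  - split; [lra|]. rewrite Rminus_0_r.
    assert (Hw : w (2 * n)%nat / K <= w m).
    { apply Rmult_le_reg_l with K; [lra|].
      replace (K * (w (2 * n)%nat / K)) with (w (2 * n)%nat) by (field; lra).
      apply w_ess_increasing. lia. }
    assert (Htpow : t ^ (3 * n) <= t ^ m) by (apply pow_antitone; [lra | lia]).
    assert (0 <= w (2 * n)%nat / K) by (apply Rdiv_le_0_compat; [apply Rlt_le, w_pos | lra]).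
    unfold L. apply Rmult_le_compat; try assumption. apply pow_le; lra.
  - split; nra.
Qed.

(* If the comparison gen(u) <= B gen(q u) holds with q^n B <= 1/2, the tail
   term of gen_split is absorbed: gen(q u) <= 2 n K w_n. *)
Lemma gen_absorb (n : nat) (q u B : R) :
  0 <= q <= 1 -> 0 <= u < 1 -> 0 <= B -> q ^ n * B <= 1/2 ->
  gen w u <= B * gen w (q * u) -> gen w (q * u) <= 2 * (INR n * (K * w n)).
Proof.
  intros Hq Hu HB Hdecay Hcomp.
  assert (Hsplit := gen_split n q u Hq Hu).
  assert (0 <= q ^ n) by (apply pow_le; lra).
  assert (0 <= gen w (q * u)) by (apply gen_nonneg; split; nra).
  nra.
Qed.

Lemma doubling_of_bounds (n : nat) (t E : R) :
  0 < INR n -> 0 <= t < 1 -> 0 < E -> E <= t ^ (3 * n) ->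
  gen w t <= 2 * (INR n * (K * w n)) -> w (2 * n)%nat <= 2 * K ^ 2 / E * w n.
Proof.
  intros Hn Ht HE HEt Hupper.
  assert (Hwin : w (2 * n)%nat / K * t ^ (3 * n) <= 2 * (K * w n)).
  { apply Rmult_le_reg_l with (INR n); [exact Hn|].
    assert (Hlower := gen_window n t Ht). lra. }
  assert (Hw2 := w_pos (2 * n)).
  assert (Hscaled : w (2 * n)%nat * E <= 2 * K ^ 2 * w n).
  { assert (w (2 * n)%nat * E <= w (2 * n)%nat * t ^ (3 * n))
      by (apply Rmult_le_compat_l; lra).
    assert (w (2 * n)%nat * t ^ (3 * n) = K * (w (2 * n)%nat / K * t ^ (3 * n)))
      by (field; lra).
    nra. }
  apply Rmult_le_reg_r with E; [exact HE|].
  replace (2 * K ^ 2 / E * w n * E) with (2 * K ^ 2 * w n) by (field; lra).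
  exact Hscaled.
Qed.

(* Take r = 1 - x with x = alpha/n and alpha = 2B/a: then
   r^2 = q^2 T_a(r)^2 with (q^2)^n B <= 1/2, and r^(6n) >= exp(-12 alpha). *)
Lemma doubling_eventually (a B : R) :
  0 < a < 1 -> 0 < B ->
  (forall r, 0 < r < 1 -> gen w (mobius a r ^ 2) <= B * gen w (r ^ 2)) ->
  exists C N0, 0 < C /\ forall n, (N0 <= n)%nat -> w (2 * n)%nat <= C * w n.
Proof.
  intros Ha HB Hcomp.
  set (al := 2 * B / a).
  assert (Hal : 0 < al) by (unfold al; apply Rdiv_lt_0_compat; lra).
  assert (HE : 0 < exp (- (12 * al))) by apply exp_pos.
  destruct (INR_unbounded (2 * al)) as [N0 HN0].
  exists (2 * K ^ 2 / exp (- (12 * al))), N0. split.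
  { assert (0 < K ^ 2) by (apply pow_lt; lra). apply Rdiv_lt_0_compat; lra. }
  intros n Hn.
  assert (Hnpos : 0 < INR n) by (apply le_INR in Hn; lra).
  set (x := al / INR n).
  assert (Hxn : INR n * x = al) by (unfold x; field; lra).
  assert (Hx : 0 < x <= 1/2).
  { split; [unfold x; apply Rdiv_lt_0_compat; lra|].
    apply le_INR in Hn. nra. }
  set (r := 1 - x). set (s := mobius a r). set (q := r / s).
  assert (Hr : 0 < r < 1) by (unfold r; lra).
  assert (Hs := mobius_bounds a r Ha Hr). fold s in Hs.
  assert (Hq2 : 0 <= q ^ 2 <= 1).
  { assert (0 <= q <= 1).
    { unfold q. split; [apply Rdiv_le_0_compat; lra|].
      apply Rmult_le_reg_r with s; [lra|]. unfold Rdiv.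
      rewrite Rmult_assoc, Rinv_l by lra. lra. }
    split; nra. }
  assert (Hrq : r ^ 2 = q ^ 2 * s ^ 2) by (unfold q; field; lra).
  assert (Hdecay : (q ^ 2) ^ n * B <= 1/2).
  { apply mobius_ratio_decay; try lra.
    replace (INR n * (a * x)) with (a * (INR n * x)) by ring.
    rewrite Hxn. unfold al. field. lra. }
  apply (doubling_of_bounds n (r ^ 2)); [exact Hnpos | split; nra | exact HE | |].
  - rewrite <- pow_mult. unfold r.
    replace (12 * al) with (2 * INR (2 * (3 * n)) * x)
      by (rewrite !mult_INR, <- Hxn; simpl; ring).
    apply exp_pow_lower. lra.
  - rewrite Hrq. apply gen_absorb with B; [exact Hq2 | split; nra | lra | exact Hdecay |].
    rewrite <- Hrq. apply Hcomp, Hr.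
Qed.

End EssentiallyIncreasingWeights.

Lemma inv_ess_increasing (beta : nat -> R) (K : R) :
  (forall n, 0 < beta n) -> (forall m n, (n <= m)%nat -> beta m <= K * beta n) ->
  forall n m, (n <= m)%nat -> / beta n <= K * / beta m.
Proof.
  intros Hb Hdec n m Hnm.
  assert (Hbn := Hb n). assert (Hbm := Hb m). specialize (Hdec m n Hnm).
  apply Rmult_le_reg_r with (beta n * beta m); [nra|].
  replace (/ beta n * (beta n * beta m)) with (beta m) by (field; lra).
  replace (K * / beta m * (beta n * beta m)) with (K * beta n) by (field; lra).
  exact Hdec.
Qed.

Lemma doubling_initial_segment (beta : nat -> R) :
  (forall n, 0 < beta n) ->
  forall N, exists d, 0 < d /\ forall n, (n < N)%nat -> beta (2 * n)%nat >= d * beta n.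
Proof.
  intros Hb N. induction N as [|N [d [Hd IH]]].
  - exists 1. split; [lra | intros; lia].
  - exists (Rmin d (beta (2 * N)%nat / beta N)). split.
    + apply Rmin_pos; [exact Hd | apply Rdiv_lt_0_compat; apply Hb].
    + intros n Hn. assert (Hbn := Hb n).
      destruct (Nat.eq_dec n N) as [-> | Hne].
      * assert (Rmin d (beta (2 * N)%nat / beta N) * beta N
                <= beta (2 * N)%nat / beta N * beta N)
          by (apply Rmult_le_compat_r; [lra | apply Rmin_r]).
        assert (beta (2 * N)%nat / beta N * beta N = beta (2 * N)%nat) by (field; lra).
        lra.
      * specialize (IH n ltac:(lia)).
        assert (Rmin d (beta (2 * N)%nat / beta N) * beta n <= d * beta n)
          by (apply Rmult_le_compat_r; [lra | apply Rmin_l]).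
        lra.
Qed.

Lemma Delta2_of_eventual_doubling (beta : nat -> R) (C : R) (N0 : nat) :
  (forall n, 0 < beta n) -> 0 < C ->
  (forall n, (N0 <= n)%nat -> / beta (2 * n)%nat <= C * / beta n) ->
  Delta2 beta.
Proof.
  intros Hb HC Hlate.
  destruct (doubling_initial_segment beta Hb N0) as [d0 [Hd0 Hearly]].
  set (delta := Rmin (1/2) (Rmin d0 (/ C))).
  assert (Hdelta_d0 : delta <= d0) by (eapply Rle_trans; [apply Rmin_r | apply Rmin_l]).
  assert (Hdelta_C : delta <= / C) by (eapply Rle_trans; [apply Rmin_r | apply Rmin_r]).
  assert (HCinv : 0 < / C) by (apply Rinv_0_lt_compat, HC).
  exists delta. split.
  { split; [apply Rmin_pos; [lra | apply Rmin_pos; lra] | ].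
    apply Rle_lt_trans with (1/2); [apply Rmin_l | lra]. }
  intro n. assert (Hbn := Hb n). assert (Hb2 := Hb (2 * n)%nat).
  destruct (Nat.lt_ge_cases n N0) as [Hn | Hn].
  - specialize (Hearly n Hn).
    assert (delta * beta n <= d0 * beta n) by (apply Rmult_le_compat_r; lra). lra.
  - specialize (Hlate n Hn).
    assert (Hratio : / C * beta n <= beta (2 * n)%nat).
    { apply Rmult_le_reg_l with (C * / beta n * / beta (2 * n)%nat).
      - apply Rmult_lt_0_compat; [apply Rmult_lt_0_compat|]; auto using Rinv_0_lt_compat.
      - replace (C * / beta n * / beta (2 * n)%nat * (/ C * beta n)) with (/ beta (2 * n)%nat)
          by (field; lra).
        replace (C * / beta n * / beta (2 * n)%nat * beta (2 * n)%nat) with (C * / beta n)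
          by (field; lra).
        exact Hlate. }
    assert (delta * beta n <= / C * beta n) by (apply Rmult_le_compat_r; lra). lra.
Qed.

Theorem mainTheorem12 (beta : nat -> R) (a : R) :
  (forall n : nat, 0 < beta n) ->
  ess_decreasing beta ->
  Rbar_le (Finite 1) (LimInf_seq (fun n : nat => Rpower (beta n) (/ INR n))) ->
  0 < a < 1 ->
  bounded_comp beta (RtoC a) ->
  Delta2 beta.
Proof.
  intros Hb [K [HK Hdec]] Hli Ha Hbc.
  assert (Hconv := gen_inv_converges beta Hb Hli).
  destruct (kernel_comparison beta Hb a Ha Hconv Hbc) as [B [HB Hcomp]].
  destruct (doubling_eventually (fun n => / beta n) K
              (fun n => Rinv_0_lt_compat _ (Hb n)) HK
              (inv_ess_increasing beta K Hb Hdec) Hconv a B Ha HB Hcomp)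
    as [C [N0 [HC Hdoubling]]].
  exact (Delta2_of_eventual_doubling beta C N0 Hb HC Hdoubling).
Qed.
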